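(* Let $\Sigma$ be a ranked alphabet, $B$ a strong bimonoid, $\mathcal{A}=(Q,\delta,F)$ a $(\Sigma,B)$-wta and $\xi=\sigma(\xi_1,\dots,\xi_k)\in T_\Sigma$. Then: (i)(a) if $h^{\neq\mathbb{0}}_{\mathrm{V}(\mathcal{A})}(\xi_i)=\emptyset$ for some $i\in[k]$, then $h^{\neq\mathbb{0}}_{\mathrm{V}(\mathcal{A})}(\xi)=\emptyset$; (b) if $R^{\neq\mathbb{0}}_{\mathcal{A}}(\xi_i)=\emptyset$ for some $i\in[k]$, then $R^{\neq\mathbb{0}}_{\mathcal{A}}(\xi)=\emptyset$. Moreover, if $\mathcal{A}$ is bottom-up deterministic, then also: (ii) (a) $|h^{\neq\mathbb{0}}_{\mathrm{V}(\mathcal{A})}(\xi)|\le 1$ and (b) $|R^{\neq\mathbb{0}}_{\mathcal{A}}(\xi)|\le 1$; (iii) either (a) $h^{\neq\mathbb{0}}_{\mathrm{V}(\mathcal{A})}(\xi)=\emptyset=R^{\neq\mathbb{0}}_{\mathcal{A}}(\xi)$, or (b) there is $q\in Q$ with $h^{\neq\mathbb{0}}_{\mathrm{V}(\mathcal{A})}(\xi)=\{q\}=R^{\neq\mathbb{0}}_{\mathcal{A}}(\xi)$, and there is exactly one $\rho\in R_{\mathcal{A}}(q,\xi)$ with $\mathrm{wt}_{\mathcal{A}}(\rho)\neq\mathbb{0}$, and for it $h_{\mathrm{V}(\mathcal{A})}(\xi)_q=\mathrm{wt}_{\mathcal{A}}(\rho)$.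
   Context: Ranked alphabet $\Sigma$ (finite, with ranks; $\Sigma^{(k)}$ the symbols of rank $k$; $\Sigma^{(0)}\neq\emptyset$), trees $T_\Sigma$, positions $\mathrm{pos}(\xi)$ ($\mathrm{pos}(\sigma(\xi_1,\dots,\xi_k))=\{\varepsilon\}\cup\{iv\mid i\in[k],v\in\mathrm{pos}(\xi_i)\}$). A strong bimonoid $(B,\oplus,\otimes,\mathbb{0},\mathbb{1})$: $(B,\oplus,\mathbb{0})$ commutative monoid, $(B,\otimes,\mathbb{1})$ monoid, $\mathbb{0}\ne\mathbb{1}$, $\mathbb{0}$ multiplicatively absorbing; no distributivity. $\bigotimes_{i=1}^k a_i=a_1\otimes\cdots\otimes a_k$ ($\mathbb{1}$ if $k=0$). A $(\Sigma,B)$-wta is $\mathcal{A}=(Q,\delta,F)$, $Q$ finite nonempty, $\delta_k:Q^k\times\Sigma^{(k)}\times Q\to B$, $F:Q\to B$. $h_{\mathrm{V}(\mathcal{A})}:T_\Sigma\to B^Q$ is defined recursively by $h_{\mathrm{V}(\mathcal{A})}(\sigma(\xi_1,\dots,\xi_k))_q=\bigoplus_{q_1,\dots,q_k\in Q}\big(\bigotimes_{i=1}^k h_{\mathrm{V}(\mathcal{A})}(\xi_i)_{q_i}\big)\otimes\delta_k(q_1\dots q_k,\sigma,q)$. A run on $\xi$ is a map $\rho:\mathrm{pos}(\xi)\to Q$; it is a $q$-run if $\rho(\varepsilon)=q$; $R_{\mathcal{A}}(q,\xi)$ is the set of $q$-runs; $\rho|_i(w)=\rho(iw)$; $\mathrm{wt}_{\mathcal{A}}(\rho)=\big(\bigotimes_{i=1}^k\mathrm{wt}_{\mathcal{A}}(\rho|_i)\big)\otimes\delta_k(\rho(1)\dots\rho(k),\sigma,\rho(\varepsilon))$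 for $\xi=\sigma(\xi_1,\dots,\xi_k)$. $h^{\neq\mathbb{0}}_{\mathrm{V}(\mathcal{A})}(\xi)=\{q\in Q\mid h_{\mathrm{V}(\mathcal{A})}(\xi)_q\neq\mathbb{0}\}$ and $R^{\neq\mathbb{0}}_{\mathcal{A}}(\xi)=\{q\in Q\mid \exists\rho\in R_{\mathcal{A}}(q,\xi):\mathrm{wt}_{\mathcal{A}}(\rho)\neq\mathbb{0}\}$. $\mathcal{A}$ is bottom-up deterministic if for all $k,\sigma\in\Sigma^{(k)},q_1,\dots,q_k$ there is at most one $q$ with $\delta_k(q_1\dots q_k,\sigma,q)\ne\mathbb{0}$. *)

From mathcomp Require Import all_boot.
Set Implicit Arguments. Unset Strict Implicit. Unset Printing Implicit Defensive.

Record strong_bimonoid := StrongBimonoid {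
  bcar :> Type;
  badd : bcar -> bcar -> bcar;
  bmul : bcar -> bcar -> bcar;
  bzero : bcar;
  bone : bcar;
  baddA : forall a b c, badd a (badd b c) = badd (badd a b) c;
  baddC : forall a b, badd a b = badd b a;
  badd0r : forall a, badd a bzero = a;
  bmulA : forall a b c, bmul a (bmul b c) = bmul (bmul a b) c;
  bmul1l : forall a, bmul bone a = a;
  bmul1r : forall a, bmul a bone = a;
  bmul0l : forall a, bmul bzero a = bzero;
  bmul0r : forall a, bmul a bzero = bzero;
  bzero_neq_one : bzero <> bone
}.

(* Trees over a ranked alphabet (Sigma, rank): a node labelled s has exactly
   rank s children, indexed by 'I_(rank s) (child i = the paper's child i+1). *)
Inductive tree (Sigma : Type) (rank : Sigma -> nat) : Type :=
  Node (s : Sigma) of ('I_(rank s) -> tree rank).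
Arguments Node {Sigma rank} s _.

Section Wta.
Variables (Sigma : Type) (rank : Sigma -> nat).

Fixpoint posb (t : tree rank) (w : seq nat) : bool :=
  match t with
  | Node s ch =>
      match w with
      | [::] => true
      | i :: w' => [exists j : 'I_(rank s), (nat_of_ord j == i) && posb (ch j) w']
      end
  end.

Definition pos_of (t : tree rank) := {w : seq nat | posb t w}.

Lemma posb_root (t : tree rank) : posb t [::].
Proof. by case: t. Qed.

Definition root_pos (t : tree rank) : pos_of t := exist _ [::] (posb_root t).

Lemma posb_child s (ch : 'I_(rank s) -> tree rank) (j : 'I_(rank s)) w :
  posb (ch j) w -> posb (Node s ch) (nat_of_ord j :: w).
Proof. by move=> H /=; apply/existsP; exists j; rewrite eqxx H. Qed.

Variables (B : strong_bimonoid) (Q : finType).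

(* a (Sigma,B)-wta: delta s qs q = delta_k(q_1..q_k, s, q), F final weights *)
Record wta := Wta {
  delta : forall s : Sigma, {ffun 'I_(rank s) -> Q} -> Q -> B;
  finalw : Q -> B
}.
Arguments delta w s qs q : clear implicits.

Variable A : wta.

Fixpoint hV (t : tree rank) : Q -> B :=
  match t with
  | Node s ch => fun q =>
      \big[@badd B/bzero B]_(qs : {ffun 'I_(rank s) -> Q})
        bmul (\big[@bmul B/bone B]_(i < rank s) hV (ch i) (qs i))
             (delta A s qs q)
  end.

Definition run (t : tree rank) := pos_of t -> Q.

Definition restrict s (ch : 'I_(rank s) -> tree rank) (rho : run (Node s ch))
  (j : 'I_(rank s)) : run (ch j) :=
  fun p => rho (exist _ (nat_of_ord j :: sval p) (posb_child (svalP p))).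
Arguments restrict {s ch} rho j _.

Fixpoint wt (t : tree rank) : run t -> B :=
  match t return run t -> B with
  | Node s ch => fun rho =>
      bmul (\big[@bmul B/bone B]_(i < rank s) wt (restrict rho i))
           (delta A s [ffun i => restrict rho i (root_pos (ch i))]
                  (rho (root_pos (Node s ch))))
  end.

Definition qrun (q : Q) (t : tree rank) (rho : run t) : Prop :=
  rho (root_pos t) = q.

Definition hV_nz (t : tree rank) : Q -> Prop := fun q => hV t q <> bzero B.
Definition R_nz (t : tree rank) : Q -> Prop :=
  fun q => exists rho : run t, qrun q rho /\ wt rho <> bzero B.

Definition bu_deterministic : Prop :=
  forall (s : Sigma) (qs : {ffun 'I_(rank s) -> Q}) (q q' : Q),
    delta A s qs q <> bzero B -> delta A s qs q' <> bzero B -> q = q'.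

End Wta.
Arguments run {Sigma rank} Q t.

Definition is_empty (Q : Type) (S : Q -> Prop) : Prop := forall q, ~ S q.
Definition at_most_one (Q : Type) (S : Q -> Prop) : Prop :=
  forall q q', S q -> S q' -> q = q'.
Definition is_singleton (Q : Type) (S : Q -> Prop) (q : Q) : Prop :=
  forall q', S q' <-> q' = q.

(* In a bottom-up deterministic wta every tree carries a run rho0 such that
   every run of nonzero weight equals rho0, and h_V(t) equals wt(rho0) at the
   root state of rho0 and 0 elsewhere.  At a node, each child's vector then has
   at most one nonzero entry, so the sum defining h_V collapses to a single
   summand even though B is not distributive, and determinism leaves only one
   possible root state.  Part (i) only uses that 0 is multiplicatively
   absorbing. *)

From HB Require Import structures.
From mathcomp Require Import all_boot.
From Stdlib Require Import FunctionalExtensionality Classical ClassicalEpsilon.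
Set Implicit Arguments. Unset Strict Implicit. Unset Printing Implicit Defensive.

Section BimonoidBigops.
Variable B : strong_bimonoid.

Lemma badd0l (a : B) : badd (bzero B) a = a.
Proof. by rewrite baddC badd0r. Qed.

HB.instance Definition _ := Monoid.isComLaw.Build B (bzero B) (@badd B)
  (@baddA B) (@baddC B) badd0l.
HB.instance Definition _ := Monoid.isLaw.Build B (bone B) (@bmul B)
  (@bmulA B) (@bmul1l B) (@bmul1r B).

Lemma bprod_eq0 (I : finType) (F : I -> B) j :
  F j = bzero B -> \big[@bmul B/bone B]_i F i = bzero B.
Proof.
move=> Fj0; rewrite -(cat_take_drop (index j (index_enum I)) (index_enum I)).
rewrite big_cat (drop_nth j) ?mem_index_enum ?index_mem // nth_index ?mem_index_enum //.
by rewrite big_cons /= Fj0 bmul0l bmul0r.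
Qed.

Lemma bsum1 (I : finType) (F : I -> B) j :
  (forall i, i != j -> F i = bzero B) -> \big[@badd B/bzero B]_i F i = F j.
Proof. by move=> F0; rewrite (bigD1 j) //= big1 ?badd0r. Qed.

End BimonoidBigops.

Notation child_run rho i := (@restrict _ _ _ _ _ rho i).

Section Runs.
Variables (Sigma : Type) (rank : Sigma -> nat) (Q : finType).
Variables (s : Sigma) (ch : 'I_(rank s) -> tree rank).

Lemma run_eq_node (rho1 rho2 : run Q (Node s ch)) :
  rho1 (root_pos _) = rho2 (root_pos _) ->
  (forall i, child_run rho1 i = child_run rho2 i) -> rho1 = rho2.
Proof.
move=> eq_root eq_child; apply: functional_extensionality => -[[|j w] pw].
  by rewrite (_ : exist _ [::] pw = root_pos (Node s ch)) //; apply: val_inj.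
have /existsP[i /andP[/eqP ij pw']] := pw; subst j.
have := congr1 (fun rho => rho (exist _ w pw')) (eq_child i).
by rewrite /restrict (bool_irrelevance (posb_child _) pw).
Qed.

(* The inner fallbacks to [q] are never reached on genuine positions. *)
Definition node_run (rhos : forall i, run Q (ch i)) (q : Q) : run Q (Node s ch) :=
  fun p => if sval p is j :: w then
             if insub j is Some i then
               if insub w is Some p' then rhos i p' else q
             else q
           else q.

Lemma node_run_root rhos q : node_run rhos q (root_pos _) = q.
Proof. by []. Qed.

Lemma child_node_run rhos q i : child_run (node_run rhos q) i = rhos i.
Proof.
apply: functional_extensionality => p.
by rewrite /restrict /node_run /= valK valK.
Qed.

End Runs.

Section Wta.
Variables (Sigma : Type) (rank : Sigma -> nat) (B : strong_bimonoid) (Q : finType).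
Variable A : wta rank B Q.

Lemma hV_node_eq0 s (ch : 'I_(rank s) -> tree rank) i :
  (forall q, hV A (ch i) q = bzero B) -> forall q, hV A (Node s ch) q = bzero B.
Proof. by move=> hV0 q; apply: big1 => qs _; rewrite (bprod_eq0 (j := i)) ?hV0 ?bmul0l. Qed.

Lemma wt_node_eq0 s (ch : 'I_(rank s) -> tree rank) (rho : run Q (Node s ch)) i :
  wt A (child_run rho i) = bzero B -> wt A rho = bzero B.
Proof. by move=> wt0; rewrite /= (bprod_eq0 (j := i)) ?wt0 ?bmul0l. Qed.

Lemma hV_node_single s (ch : 'I_(rank s) -> tree rank) (qs0 : {ffun 'I_(rank s) -> Q}) :
  (forall i q, q != qs0 i -> hV A (ch i) q = bzero B) ->
  forall q, hV A (Node s ch) q =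
            bmul (\big[@bmul B/bone B]_i hV A (ch i) (qs0 i)) (delta A qs0 q).
Proof.
move=> hV0 q; rewrite /= (bsum1 (j := qs0)) // => qs /eqP qs_neq.
have [i qsi_neq] : exists i, qs i != qs0 i.
  case/boolP: [exists i, qs i != qs0 i] => [/existsP // | /existsPn qs_eq].
  by case: qs_neq; apply/ffunP => i; apply/eqP; rewrite -[_ == _]negbK qs_eq.
by rewrite (bprod_eq0 (j := i)) ?hV0 ?bmul0l.
Qed.

Lemma wt_node_run s (ch : 'I_(rank s) -> tree rank) rhos q :
  wt A (node_run rhos q) =
  bmul (\big[@bmul B/bone B]_i wt A (rhos i))
       (delta A [ffun i => rhos i (root_pos (ch i))] q).
Proof.
congr bmul; first by apply: eq_bigr => i _; rewrite child_node_run.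
by congr delta; apply/ffunP => i; rewrite !ffunE child_node_run.
Qed.

(* [rho0] may have weight zero: this covers trees on which every run vanishes,
   its root state then being arbitrary. *)
Definition determining_run t (rho0 : run Q t) : Prop :=
  (forall rho, wt A rho <> bzero B -> rho = rho0) /\
  (forall q, hV A t q = if rho0 (root_pos t) == q then wt A rho0 else bzero B).

Lemma hV_nzE t (rho0 : run Q t) : determining_run rho0 ->
  forall q, hV_nz A t q <-> rho0 (root_pos t) = q /\ wt A rho0 <> bzero B.
Proof.
move=> [_ hV_rho0] q; rewrite /hV_nz hV_rho0.
by case: eqP => [-> | neq]; split => // -[].
Qed.

Lemma R_nzE t (rho0 : run Q t) : determining_run rho0 ->
  forall q, R_nz A t q <-> rho0 (root_pos t) = q /\ wt A rho0 <> bzero B.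
Proof.
move=> [uniq_rho0 _] q; split => [[rho [root_q nz]] | [root_q nz]]; last by exists rho0.
by rewrite -(uniq_rho0 rho nz).
Qed.

Hypothesis det : bu_deterministic A.

Lemma delta_target s (qs : {ffun 'I_(rank s) -> Q}) (q0 : Q) :
  exists qt, forall q, delta A qs q <> bzero B -> q = qt.
Proof.
case: (classic (exists q, delta A qs q <> bzero B)) => [[qt nz] | none].
  by exists qt => q nz'; apply: det nz' nz.
by exists q0 => q nz; case: none; exists q.
Qed.

Lemma determining_run_node (q0 : Q) s (ch : 'I_(rank s) -> tree rank)
    (rhos : forall i, run Q (ch i)) :
  (forall i, determining_run (rhos i)) -> exists rho : run Q (Node s ch), determining_run rho.
Proof.
move=> det_rhos; pose qs0 := [ffun i => rhos i (root_pos (ch i))].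
have [qt qtP] := delta_target qs0 q0.
exists (node_run rhos qt); split.
  move=> rho nz.
  have child_eq i : child_run rho i = rhos i.
    by apply: (det_rhos i).1 => /wt_node_eq0.
  apply: run_eq_node => [|i]; last by rewrite child_node_run child_eq.
  rewrite node_run_root; apply: qtP => delta0; apply: nz => /=.
  rewrite (_ : [ffun i => _] = qs0) ?delta0 ?bmul0r //.
  by apply/ffunP => i; rewrite /qs0 !ffunE child_eq.
move=> q; rewrite node_run_root wt_node_run -/qs0 (hV_node_single (qs0 := qs0)); last first.
  by move=> i q'; rewrite (det_rhos i).2 /qs0 ffunE eq_sym => /negbTE ->.
rewrite (eq_bigr (fun i => wt A (rhos i))) => [|i _]; last first.
  by rewrite (det_rhos i).2 /qs0 ffunE eqxx.
case: eqP => [-> // | neq].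
rewrite (_ : delta A qs0 q = bzero B) ?bmul0r //.
by apply: NNPP => nz; apply: neq; rewrite (qtP q nz).
Qed.

Lemma exists_determining_run (q0 : Q) t : exists rho : run Q t, determining_run rho.
Proof.
elim: t => s ch IH.
pose rhos i := sval (constructive_indefinite_description _ (IH i)).
by apply: (determining_run_node q0 (rhos := rhos)) => i; apply: svalP.
Qed.

End Wta.

Theorem lemma3p5 (Sigma : finType) (rank : Sigma -> nat)
  (Hrank0 : exists s : Sigma, rank s = 0%N)
  (B : strong_bimonoid) (Q : finType) (HQ : 0 < #|Q|) (A : wta rank B Q)
  (s : Sigma) (ch : 'I_(rank s) -> tree rank) :
  let xi := Node s ch in
  ((exists i : 'I_(rank s), is_empty (hV_nz A (ch i))) -> is_empty (hV_nz A xi)) /\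
  ((exists i : 'I_(rank s), is_empty (R_nz A (ch i))) -> is_empty (R_nz A xi)) /\
  (bu_deterministic A ->
     (at_most_one (hV_nz A xi) /\ at_most_one (R_nz A xi)) /\
     ((is_empty (hV_nz A xi) /\ is_empty (R_nz A xi)) \/
      exists q : Q,
        is_singleton (hV_nz A xi) q /\ is_singleton (R_nz A xi) q /\
        exists rho : run Q xi,
          (qrun q rho /\ wt A rho <> bzero B) /\
          (forall rho' : run Q xi, qrun q rho' -> wt A rho' <> bzero B -> rho' = rho) /\
          hV A xi q = wt A rho)).
Proof.
move=> xi; have [q0 _] := card_gt0P HQ.
split; [|split].
- move=> [i empty_i] q; apply; apply: (hV_node_eq0 (i := i)) => q'.
  exact: NNPP (empty_i q').
- move=> [i empty_i] q [rho [_ nz]]; apply: nz; apply: (wt_node_eq0 (i := i)).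
  apply: NNPP => nz; apply: (empty_i (child_run rho i (root_pos _))).
  by exists (child_run rho i).
move=> det; have [rho0 det_rho0] := exists_determining_run det q0 xi.
have hVE := hV_nzE det_rho0; have RE := R_nzE det_rho0.
split; first by split => q q'; rewrite ?hVE ?RE => -[<- _] [<- _].
case: (classic (wt A rho0 = bzero B)) => [wt0 | nz].
  by left; split => q; rewrite ?hVE ?RE => -[].
right; exists (rho0 (root_pos xi)); split; [|split].
- by move=> q; rewrite hVE; split => [[] | ->].
- by move=> q; rewrite RE; split => [[] | ->].
exists rho0; split; [by [] | split].
- by move=> rho _; apply: det_rho0.1.
- by rewrite det_rho0.2 eqxx.
Qed.
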